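(* Let $(A_0,A_1,A_2)$ be an extendable collection of cap sets in $\mathbb{F}_3^n$ with $|A_1|=|A_2|$, and let $S\subseteq\{0,1,2\}^m$ be an admissible set consisting of $\binom{m}{w}$ vectors, each of weight $w$. Then \[|S(A_0,A_1,A_2)| = \binom{m}{w}|A_0|^{m-w}|A_1|^{w}.\]
   Context: A cap set is a set $A \subseteq \mathbb{F}_3^n$ such that the only solutions of $x+y+z=0$ with $x,y,z\in A$ are those with $x=y=z$. Cap sets $A_0,A_1,A_2\subseteq\mathbb{F}_3^n$ form an extendable collection if (1) whenever $x,y\in A_0$ (not necessarily distinct) and $z\in A_1\cup A_2$, $x+y+z\neq 0$; and (2) whenever $x\in A_0$, $y\in A_1$, $z\in A_2$, $x+y+z\neq 0$. A set $S\subseteq\{0,1,2\}^m$ is admissible if (1) for all distinct $s,s'\in S$ there are coordinates $i,j$ with $s_i=0\neq s'_i$ and $s_j\neq 0=s'_j$; and (2) for all distinct $s,s',s''\in S$ there is a coordinate $k$ such that the multiset $\{s_k,s'_k,s''_k\}$ equals $\{0,1,2\}$, $\{0,0,1\}$ or $\{0,0,2\}$. The weight of a vector is its number of nonzero coordinates. For $s\in\{0,1,2\}^m$, $s(A_0,A_1,A_2)=A_{s_1}\times\cdots\times A_{s_m}\subseteq\mathbb{F}_3^{nm}$ and $S(A_0,A_1,A_2)=\bigcup_{s\in S}s(A_0,A_1,A_2)$. *)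

From HB Require Import structures.
From mathcomp Require Import all_boot all_order all_algebra.
Set Implicit Arguments. Unset Strict Implicit. Unset Printing Implicit Defensive.
Import GRing.Theory.
Local Open Scope ring_scope.

Notation F3vec n := 'rV['F_3]_n.

Definition cap_set (n : nat) (A : {set F3vec n}) : Prop :=
  forall x y z, x \in A -> y \in A -> z \in A -> x + y + z = 0 -> x = y /\ y = z.

Definition extendable (n : nat) (A0 A1 A2 : {set F3vec n}) : Prop :=
  [/\ cap_set A0, cap_set A1, cap_set A2,
      (forall x y z, x \in A0 -> y \in A0 -> z \in A1 :|: A2 -> x + y + z != 0) &
      (forall x y z, x \in A0 -> y \in A1 -> z \in A2 -> x + y + z != 0)].

Notation tvec m := {ffun 'I_m -> 'I_3}.

Definition good_triple (a b c : 'I_3) : bool :=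
  let t := [:: val a; val b; val c] in
  [|| perm_eq t [:: 0%N; 1%N; 2%N], perm_eq t [:: 0%N; 0%N; 1%N]
    | perm_eq t [:: 0%N; 0%N; 2%N]].

Definition admissible (m : nat) (S : {set tvec m}) : Prop :=
  (forall s s', s \in S -> s' \in S -> s != s' ->
     (exists i, val (s i) == 0%N /\ val (s' i) != 0%N) /\
     (exists j, val (s j) != 0%N /\ val (s' j) == 0%N)) /\
  (forall s s' s'', s \in S -> s' \in S -> s'' \in S ->
     s != s' -> s != s'' -> s' != s'' ->
     exists k, good_triple (s k) (s' k) (s'' k)).

Definition weight (m : nat) (s : tvec m) : nat := #|[set i | val (s i) != 0%N]|.

Definition Asel (n : nat) (A0 A1 A2 : {set F3vec n}) (i : 'I_3) : {set F3vec n} :=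
  if val i == 0%N then A0 else if val i == 1%N then A1 else A2.

(* F_3^{nm} is modelled as m blocks of vectors in F_3^n: {ffun 'I_m -> 'rV_n}. *)
Definition sprod (n m : nat) (A0 A1 A2 : {set F3vec n}) (s : tvec m)
  : {set {ffun 'I_m -> F3vec n}} :=
  [set x : {ffun 'I_m -> F3vec n} | [forall i, x i \in Asel A0 A1 A2 (s i)]].

Definition Sprod (n m : nat) (A0 A1 A2 : {set F3vec n}) (S : {set tvec m})
  : {set {ffun 'I_m -> F3vec n}} :=
  \bigcup_(s in S) sprod A0 A1 A2 s.

From mathcomp Require Import all_boot all_order all_algebra.

(* For distinct s, s' in S, admissibility gives a coordinate i with s_i = 0 and
   s'_i <> 0; a common point x of the boxes s(A) and s'(A) would then have
   x_i in A0 and x_i in A1 u A2, and x_i + x_i + x_i = 0 violates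
   extendability.  So S(A) is a disjoint union of #|S| boxes, and each box of
   weight w has |A0|^(m-w) |A1|^w points because |A1| = |A2|. *)

Set Implicit Arguments. Unset Strict Implicit. Unset Printing Implicit Defensive.
Import GRing.Theory.

Lemma addrrr_F3 (V : lmodType 'F_3) (v : V) : (v + v + v = 0)%R.
Proof.
rewrite -mulr2n -mulrSr -scaler_nat.
have -> : (3%:R = 0 :> 'F_3)%R by apply/val_inj.
by rewrite scale0r.
Qed.

Lemma card_bigcup_disjoint (I T : finType) (J : {set I}) (F : I -> {set T}) :
  {in J &, forall i j, i != j -> [disjoint F i & F j]} ->
  #|\bigcup_(i in J) F i| = \sum_(i in J) #|F i|.
Proof.
move=> disF; rewrite -!big_enum /=.
have: {subset enum J <= J} by move=> i; rewrite mem_enum.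
elim: (enum J) (enum_uniq J) => [|i r IH] /=; first by rewrite !big_nil cards0.
move=> /andP[ri ur] rJ; rewrite !big_cons cardsU IH // => [|j rj]; last first.
  by apply: rJ; rewrite inE rj orbT.
suff /disjoint_setI0 -> : [disjoint F i & \bigcup_(j <- r) F j] by rewrite cards0 subn0.
rewrite bigcup_seq; apply/bigcup_disjointP => j rj.
by apply: disF; rewrite ?rJ ?inE ?eqxx ?rj ?orbT //; apply: contraNneq ri => ->.
Qed.

Section Boxes.
Variables (n : nat) (A0 A1 A2 : {set 'rV['F_3]_n}).

Lemma extendable_disjoint : extendable A0 A1 A2 -> [disjoint A0 & A1 :|: A2].
Proof.
case=> _ _ _ ext0 _; apply/pred0P => x /=; apply/negP => /andP[xA0 xA12].
by move: (ext0 x x x xA0 xA0 xA12); rewrite addrrr_F3 eqxx.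
Qed.

Lemma card_sprod m (s : {ffun 'I_m -> 'I_3}) : #|A1| = #|A2| ->
  #|sprod A0 A1 A2 s| = #|A0| ^ (m - weight s) * #|A1| ^ weight s.
Proof.
move=> card_A12.
have -> : sprod A0 A1 A2 s = [set x in family (fun i => mem (Asel A0 A1 A2 (s i)))].
  by apply/setP => x; rewrite !inE.
rewrite cardsE card_family foldrE big_map big_enum /= (bigID (fun i => val (s i) == 0)) /=.
rewrite (eq_bigr (fun=> #|A0|)) => [|i si0]; last by rewrite /Asel si0.
rewrite [X in _ * X](eq_bigr (fun=> #|A1|)) => [|i /negbTE si0]; last first.
  by rewrite /Asel si0 card_A12; case: ifP.
rewrite !prod_nat_const /weight; congr (_ ^ _ * _ ^ _).
- have := cardsC [set i | val (s i) != 0]; rewrite card_ord => /(canRL (addKn _)) <-.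
  by apply: eq_card => i; rewrite !inE negbK.
- by apply: eq_card => i; rewrite inE.
Qed.

Lemma disjoint_sprod m (s s' : {ffun 'I_m -> 'I_3}) i :
  [disjoint A0 & A1 :|: A2] -> val (s i) == 0 -> val (s' i) != 0 ->
  [disjoint sprod A0 A1 A2 s & sprod A0 A1 A2 s'].
Proof.
move=> dis si0 s'i0; apply/pred0P => x; rewrite /= !inE.
apply/negP => /andP[/forallP/(_ i) xs /forallP/(_ i) xs'].
have xA0 : x i \in A0 by rewrite /Asel si0 in xs.
have xA12 : x i \in A1 :|: A2.
  by move: xs'; rewrite /Asel (negbTE s'i0) inE; case: ifP => _ ->; rewrite ?orbT.
by move: dis => /pred0P/(_ (x i)); rewrite /= xA0 xA12.
Qed.

End Boxes.

Theorem lemma2p11 (n m w : nat) (A0 A1 A2 : {set 'rV['F_3]_n})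
  (S : {set {ffun 'I_m -> 'I_3}}) :
  extendable A0 A1 A2 -> #|A1| = #|A2| ->
  admissible S -> #|S| = 'C(m, w) ->
  (forall s, s \in S -> weight s = w) ->
  #|Sprod A0 A1 A2 S| = ('C(m, w) * #|A0| ^ (m - w) * #|A1| ^ w)%N.
Proof.
move=> ext card_A12 [sep _] card_S weight_S.
rewrite /Sprod card_bigcup_disjoint => [|s s' Ss Ss' neq_ss']; last first.
  have [[i [si0 s'i0]] _] := sep s s' Ss Ss' neq_ss'.
  exact: disjoint_sprod (extendable_disjoint ext) si0 s'i0.
rewrite (eq_bigr (fun=> #|A0| ^ (m - w) * #|A1| ^ w)) => [|s Ss]; last first.
  by rewrite card_sprod // weight_S.
by rewrite sum_nat_const card_S mulnA.
Qed.
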